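(* Assume Setup (S) and the completion data (C), and suppose the integer columns $c_n$ can be (and are) chosen so that $\det A_{n,n+1}=1$ for all $n\ge 0$. Then $G=\mathbb{Z}$ and the homomorphism $\Psi:K_0(\mathfrak{A})\to C(X_{min},\mathbb{Z})$ determined by $\Psi\circ\iota_n=\Phi_n$ is a group isomorphism onto $C(X_{min},\mathbb{Z})$ sending the order unit $[1_{\mathfrak{A}}]$ to $\chi_{X_{min}}$.
   Context: Setup (S): Let $\mathfrak{A}=\varinjlim(\mathfrak{A}_n,\phi_n)$ be an AF C$^*$-algebra with $\mathfrak{A}_0=\mathbb{C}$, $\mathfrak{A}_n$ having exactly $n+1$ summands, $\phi_n$ unital injective $*$-homomorphisms with multiplicity matrices $\overline{A}_{n,n+1}\in M_{n+2,n+1}(\mathbb{N})$ ($(i,j)$ entry = multiplicity of summand $j$ of $\mathfrak{A}_n$ in summand $i$ of $\mathfrak{A}_{n+1}$), each of rank $n+1$. The Bratteli diagram has vertices $v(i,n)$, $1\le i\le n+1$, and $(\overline{A}_{n,n+1})_{ij}$ edges from $v(j,n)$ to $v(i,n+1)$. A minimal reduction is a subgraph with the same vertices, obtained by deleting edges only, in which for all $n\ge 0$ each vertex at level $n+1$ receives exactly one edge from level $n$ and each vertex at level $n$ emits at least one edge to level $n+1$. Fix a minimal reduction. Then for each $n\ge 1$ there are unique $1\le r'_n<r_n\le n+1$ and $1\le a_n\le n$ such that $v(r'_n,n)$ and $v(r_n,n)$ are the two vertices joined to $v(a_n,n-1)$, every other vertex of level $n-1$ being joined to exactly one vertex of level $n$;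 set $r_0=1$. $X_{min}$ is the set of infinite paths $(v(i_n,n))_{n\ge0}$, $i_0=1$, in the minimal reduction, with the topology having as clopen basis the nonempty sets $B(i,n)=\{\text{paths with }i_n=i\}$; it is a compact metrizable totally disconnected space. Define the linear map $R_n:\mathbb{C}^{n+1}\to C(X_{min},\mathbb{C})$ by $R_n(\alpha_1,\dots,\alpha_{n+1})=\sum_{l=0}^n\alpha_{l+1}\chi_{B(r_l,l)}$. Completion data (C): $K_0(\mathfrak{A}_n)$ is identified with $\mathbb{Z}^{n+1}$ (column vectors, positive cone $\mathbb{Z}_+^{n+1}$), $K_0(\phi_n)=\phi_{n*}$ is multiplication by $\overline{A}_{n,n+1}$, and $K_0(\mathfrak{A})=\varinjlim(\mathbb{Z}^{n+1},\phi_{n*})$ with canonical maps $\iota_n$ and order unit the image of $1\in\mathbb{Z}=K_0(\mathfrak{A}_0)$. For each $n\ge 0$ choose a column $c_n\in\mathbb{Z}^{n+2}$ such that $A_{n,n+1}=[\,\overline{A}_{n,n+1}\mid c_n\,]\in M_{n+2}(\mathbb{Z})$ is invertible. Put $A_n=(A_{0,1}^{-1}\oplus I_{n-1})(A_{1,2}^{-1}\oplus I_{n-2})\cdots(A_{n-2,n-1}^{-1}\oplus I_1)A_{n-1,n}^{-1}$ for $n\ge1$, let $G=\bigcup_{n\ge1}\{a/\det(A_n^{-1}):a\in\mathbb{Z}\}\subseteq\mathbb{Q}$ with the discrete topology, and $\Phi_n=R_n\circ A_n$ restricted to $\mathbb{Z}^{n+1}$; one has $\Phi_{n+1}\circ\phi_{n*}=\Phi_n$,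 so $\Psi$ is well defined. *)

From mathcomp Require Import all_boot all_order all_algebra.
From Stdlib Require Import Relations.
Set Implicit Arguments. Unset Strict Implicit. Unset Printing Implicit Defensive.
Import Order.TTheory GRing.Theory Num.Theory.
Local Open Scope ring_scope.

(* Vertices at level n are indexed 0-based by 'I_n.+1 (v(i,n) <-> i-1). *)

Definition AbarZ (Abar : forall n, 'M[nat]_(n.+2, n.+1)) n : 'M[int]_(n.+2, n.+1) :=
  map_mx (fun k : nat => k%:Z) (Abar n).

(* K_0(phi_n) = multiplication by Abar_{n,n+1} *)
Definition push (Abar : forall n, 'M[nat]_(n.+2, n.+1)) n (v : 'cV[int]_(n.+1))
  : 'cV[int]_(n.+2) := AbarZ Abar n *m v.

(* The inductive limit K_0(A) = lim (Z^{n+1}, phi_n_* ): disjoint union of the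
   Z^{n+1} modulo the equivalence relation generated by (n,v) ~ (n+1, phi_n_* v). *)
Definition K0pre := sigT (fun n : nat => 'cV[int]_(n.+1)).

Definition K0mk n (v : 'cV[int]_(n.+1)) : K0pre :=
  @existT nat (fun n : nat => 'cV[int]_(n.+1)) n v.

Definition K0step (Abar : forall n, 'M[nat]_(n.+2, n.+1)) (x y : K0pre) : Prop :=
  exists n (v : 'cV[int]_(n.+1)),
    x = K0mk v /\ y = K0mk (push Abar v).

Definition K0eq Abar : relation K0pre := clos_refl_sym_trans K0pre (K0step Abar).

(* the order unit: image of 1 in Z = K_0(A_0) *)
Definition K0unit : K0pre := K0mk (1 : 'cV[int]_1).

Definition pathT := forall n : nat, 'I_n.+1.

(* the minimal reduction is given by the (unique) incoming edge of each vertex at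
   level n+1: p n i is the vertex of level n joined to vertex i of level n+1 *)
Definition is_path (p : forall n, 'I_n.+2 -> 'I_n.+1) (x : pathT) : Prop :=
  forall n, p n (x n.+1) = x n.

(* continuous maps X_min -> Z (Z discrete, X_min with the basis B(i,n)):
   every point has a basic neighbourhood B(x_n, n) on which f is constant *)
Definition locconst (p : forall n, 'I_n.+2 -> 'I_n.+1) (f : pathT -> int) : Prop :=
  forall x, is_path p x -> exists n, forall y, is_path p y -> y n = x n -> f y = f x.

Definition Acomp (Abar : forall n, 'M[nat]_(n.+2, n.+1)) (c : forall n, 'cV[int]_(n.+2))
  n : 'M[int]_(n.+2) :=
  castmx (erefl, addn1 n.+1) (row_mx (AbarZ Abar n) (c n)).

Definition intr_mx m k (M : 'M[int]_(m, k)) : 'M[rat]_(m, k) := map_mx (fun z : int => z%:~R) M.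

(* A_n = (A_{0,1}^{-1} (+) I_{n-1}) ... A_{n-1,n}^{-1}, via the recursion
   A_0 = I_1, A_{n+1} = (A_n (+) I_1) A_{n,n+1}^{-1}. *)
Fixpoint Amat (Abar : forall n, 'M[nat]_(n.+2, n.+1)) (c : forall n, 'cV[int]_(n.+2))
  n : 'M[rat]_(n.+1) :=
  match n with
  | 0 => 1%:M
  | m.+1 => castmx (addn1 m.+1, addn1 m.+1) (block_mx (Amat Abar c m) 0 0 1%:M)
            *m invmx (intr_mx (Acomp Abar c m))
  end.

Definition Gset (Abar : forall n, 'M[nat]_(n.+2, n.+1)) (c : forall n, 'cV[int]_(n.+2))
  (q : rat) : Prop :=
  exists n : nat, (1 <= n)%N /\ exists a : int, q = a%:~R / \det (invmx (Amat Abar c n)).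

Definition Rmap (r : forall n, 'I_n.+1) n (alpha : 'cV[rat]_(n.+1)) (x : pathT) : rat :=
  \sum_(l < n.+1) alpha l 0 * (x l == r l)%:R.

Definition Phi Abar c (r : forall n, 'I_n.+1) n (v : 'cV[int]_(n.+1)) : pathT -> rat :=
  Rmap r (Amat Abar c n *m intr_mx v).

Definition Psi Abar c r (x : K0pre) : pathT -> rat :=
  Phi Abar c r (projT2 x).

(* Since every [det A_{n,n+1}] is 1, each [A_n] and its inverse are integer
   matrices of determinant 1 (the inverse of [A_{n,n+1}] being its adjugate); this
   gives [G = Z] and makes [Psi] integer valued. The block shape of [A_{n+1}] gives
   [Phi_{n+1} \o phi_n* = Phi_n], so [Psi] is well defined. Restricted to the
   vertices of level [n], the functions [chi_{B(r_l, l)}], [l <= n], form a basis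
   of the integer functions: going up one level, exactly the two vertices
   [r_{n+1}] and its twin share a parent and only [chi_{B(r_{n+1}, n+1)}]
   separates them. Together with the invertibility of [A_n] this yields
   injectivity, and surjectivity follows because, by compactness (König's lemma),
   a continuous integer function on [X_min] factors through some level. *)

From mathcomp Require Import all_boot all_order all_algebra.
From Stdlib Require Import Relations Classical ClassicalEpsilon.
Set Implicit Arguments. Unset Strict Implicit. Unset Printing Implicit Defensive.
Import Order.TTheory GRing.Theory Num.Theory.
Local Open Scope ring_scope.

Section Tree.

Variable p : forall n, 'I_n.+2 -> 'I_n.+1.
Arguments p : clear implicits.

(* [ancestor i l] is the vertex of level [l] below the vertex [i] of level [n]
   (meaningful for [l <= n]). *)
Fixpoint ancestor n : 'I_n.+1 -> forall l, 'I_l.+1 :=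
  match n return 'I_n.+1 -> forall l, 'I_l.+1 with
  | 0 => fun i l => inord i
  | m.+1 => fun i l => if l == m.+1 then inord i else ancestor (p m i) l
  end.

Lemma ancestor_id n (i : 'I_n.+1) : ancestor i n = i.
Proof.
by case: n i => [|n] i /=; rewrite ?eqxx; apply: val_inj; rewrite /= inordK.
Qed.

Lemma ancestor_pred n (i : 'I_n.+2) l :
  (l <= n)%N -> ancestor i l = ancestor (p n i) l.
Proof. by move=> le_ln /=; case: eqP => // eq_l; rewrite eq_l ltnn in le_ln. Qed.

Lemma ancestor_path z n l : is_path p z -> (l <= n)%N -> ancestor (z n) l = z l.
Proof.
move=> zP; elim: n => [|n IHn] le_ln.
  by move: le_ln; rewrite leqn0 => /eqP ->; apply: ancestor_id.
case: ltngtP le_ln => // [lt_ln _|->]; last by rewrite ancestor_id.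
by rewrite ancestor_pred // zP IHn.
Qed.

Lemma ancestor_edge n (i : 'I_n.+1) l :
  (l < n)%N -> p l (ancestor i l.+1) = ancestor i l.
Proof.
elim: n i => [|n IHn] i // lt_ln.
rewrite ltnS leq_eqVlt in lt_ln; case/orP: lt_ln => [/eqP->|lt_l'n].
  by rewrite (ancestor_pred _ (leqnn n)) !ancestor_id.
by rewrite (ancestor_pred _ lt_l'n) (ancestor_pred _ (ltnW lt_l'n)) IHn.
Qed.

Lemma path_agree_below y y' m M :
  is_path p y -> is_path p y' -> (m <= M)%N -> y M = y' M -> y m = y' m.
Proof.
by move=> yP y'P le_mM eqM; rewrite -(ancestor_path yP le_mM) eqM ancestor_path.
Qed.

Fixpoint path_of_step (step : forall n, 'I_n.+1 -> 'I_n.+2) n : 'I_n.+1 :=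
  match n with 0 => ord0 | m.+1 => step m (path_of_step step m) end.

Definition factors_at (f : pathT -> int) n (v : 'I_n.+1) m := forall y y',
  is_path p y -> is_path p y' -> y n = v -> y' n = v -> y m = y' m -> f y = f y'.

Lemma factors_at_mono f n (v : 'I_n.+1) m M :
  (m <= M)%N -> factors_at f v m -> factors_at f v M.
Proof.
move=> le_mM fv y y' yP y'P yv y'v eqM.
exact: fv yP y'P yv y'v (path_agree_below yP y'P le_mM eqM).
Qed.

Lemma factors_at_children f n (v : 'I_n.+1) :
  (forall i : 'I_n.+2, p n i = v -> exists m, factors_at f i m) ->
  exists m, factors_at f v m.
Proof.
move=> fchild.
have /fin_all_exists [m mP] : forall i : 'I_n.+2, exists m,
    p n i = v -> factors_at f i m.
  move=> i; have [/fchild [m mP]|ne] := eqVneq (p n i) v; first by exists m.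
  by exists 0%N => eq_v; rewrite eq_v eqxx in ne.
exists (maxn (\max_i m i) n.+1) => y y' yP y'P yv y'v eqM.
have le_m : (m (y n.+1) <= maxn (\max_i m i) n.+1)%N.
  by rewrite (leq_trans (leq_bigmax _)) ?leq_maxl.
have eq_next : y n.+1 = y' n.+1 := path_agree_below yP y'P (leq_maxr _ _) eqM.
by apply: (factors_at_mono le_m (mP _ _)) eqM; rewrite ?yP.
Qed.

(* König's lemma: if [f] factored through no level, some child of each
   bad vertex would be bad, and the path of bad vertices so obtained would
   contradict local constancy at that path. *)
Lemma locconst_factors f : locconst p f -> exists N, forall y y',
  is_path p y -> is_path p y' -> y N = y' N -> f y = f y'.
Proof.
move=> fP; suff [m mP] : exists m, factors_at f (ord0 : 'I_1) m.
  by exists m => y y' yP y'P; apply: mP; rewrite ?ord1.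
apply: NNPP => bad0.
have bad_child n (v : 'I_n.+1) : exists i : 'I_n.+2,
    ~ (exists m, factors_at f v m) -> p n i = v /\ ~ exists m, factors_at f i m.
  have [gv|bad] := classic (exists m, factors_at f v m); first by exists ord0.
  have : ~ forall i, p n i = v -> exists m, factors_at f i m.
    by move/factors_at_children.
  by case/not_all_ex_not => i iP; exists i => _; exact: imply_to_and iP.
pose step n v := proj1_sig (constructive_indefinite_description _ (bad_child n v)).
have stepP n v : ~ (exists m, factors_at f v m) ->
    p n (step n v) = v /\ ~ exists m, factors_at f (step n v) m.
  exact: proj2_sig (constructive_indefinite_description _ (bad_child n v)).
pose x := path_of_step step.
have x_bad n : ~ exists m, factors_at f (x n) m.
  by elim: n => [|n IHn]; [exact: bad0 | exact: (stepP n _ IHn).2].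
have xP : is_path p x by move=> n; exact: (stepP n _ (x_bad n)).1.
have [n nP] := fP x xP; apply: (x_bad n); exists n => y y' yP y'P yx y'x _.
by rewrite (nP y yP yx) (nP y' y'P y'x).
Qed.

End Tree.

Section Levels.

Variable p : forall n, 'I_n.+2 -> 'I_n.+1.
Arguments p : clear implicits.
Hypothesis p_surj : forall n (j : 'I_n.+1), exists i : 'I_n.+2, p n i = j.

Lemma ex_preimage n (j : 'I_n.+1) : exists i, p n i == j.
Proof. by have [i <-] := p_surj j; exists i. Qed.

Definition preimage n (j : 'I_n.+1) : 'I_n.+2 := xchoose (ex_preimage j).

Lemma preimageK n (j : 'I_n.+1) : p n (preimage j) = j.
Proof. exact/eqP/(xchooseP (ex_preimage j)). Qed.

Definition path_through N (j : 'I_N.+1) : pathT :=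
  path_of_step (fun n v => if (n < N)%N then ancestor p j n.+1 else preimage v).

Lemma path_through_below N (j : 'I_N.+1) n :
  (n <= N)%N -> path_through j n = ancestor p j n.
Proof.
elim: n => [|n IHn] le_nN /=; first by rewrite [LHS]ord1 [RHS]ord1.
by rewrite /path_through /= le_nN.
Qed.

Lemma path_through_at N (j : 'I_N.+1) : path_through j N = j.
Proof. by rewrite path_through_below // ancestor_id. Qed.

Lemma path_through_is_path N (j : 'I_N.+1) : is_path p (path_through j).
Proof.
move=> n; rewrite /path_through /=; case: ifP => [lt_nN|_]; last exact: preimageK.
by rewrite ancestor_edge // -/(path_through j n) path_through_below // ltnW.
Qed.

Variable r : forall n, 'I_n.+1.
Hypothesis r_split :
  forall n, exists r' : 'I_n.+2, (r' < r n.+1)%N /\ p n r' = p n (r n.+1).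

Definition Rvertex n (alpha : 'cV[rat]_n.+1) (j : 'I_n.+1) : rat :=
  \sum_(l < n.+1) alpha l 0 * (ancestor p j l == r l)%:R.

Lemma Rmap_vertex n (alpha : 'cV[rat]_n.+1) z :
  is_path p z -> Rmap r alpha z = Rvertex alpha (z n).
Proof. by move=> zP; apply: eq_bigr => l _; rewrite ancestor_path // -ltnS. Qed.

Lemma Rvertex_recr n (alpha : 'cV[rat]_n.+2) (i : 'I_n.+2) :
  Rvertex alpha i = Rvertex (\col_l alpha (widen_ord (leqnSn _) l) 0) (p n i)
                    + alpha ord_max 0 * (i == r n.+1)%:R.
Proof.
rewrite /Rvertex big_ord_recr /=; congr (_ + _).
  by apply: eq_bigr => l _; rewrite mxE ltn_eqF.
by rewrite eqxx; congr (_ * (_ == _)%:R); apply: val_inj; rewrite /= inordK.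
Qed.

(* [p n] is onto and identifies [r n.+1] with its twin, so by counting it is
   injective elsewhere. *)
Lemma p_injective_off n : {in [set~ r n.+1] &, injective (p n)}.
Proof.
have [r' [lt_r' eq_p]] := r_split n.
apply/imset_injP; rewrite cardsC1 card_ord /=.
suff -> : p n @: [set~ r n.+1] = setT by rewrite cardsT card_ord.
apply/setP => j; rewrite inE; have [i <-] := p_surj j.
have [->|ne_i] := eqVneq i (r n.+1); last by apply: imset_f; rewrite !inE.
by rewrite -eq_p; apply: imset_f; rewrite !inE neq_ltn lt_r'.
Qed.

(* The last coordinate is read off the values at [r n.+1] and at its twin; the
   others solve the same problem one level down. *)
Lemma Rvertex_eq0 n (alpha : 'cV[rat]_n.+1) :
  (forall j, Rvertex alpha j = 0) -> alpha = 0.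
Proof.
elim: n alpha => [|n IHn] alpha alpha0.
  apply/matrixP => i k; rewrite !ord1 mxE; have := alpha0 ord0.
  by rewrite /Rvertex big_ord1 [ancestor _ _ _]ord1 [r 0]ord1 eqxx mulr1.
have [r' [lt_r' eq_p]] := r_split n.
have ne_r' : (r' == r n.+1) = false by apply/negbTE; rewrite neq_ltn lt_r'.
have top0 : alpha ord_max 0 = 0.
  have := alpha0 (r n.+1); have := alpha0 r'.
  by rewrite !Rvertex_recr eq_p ne_r' eqxx mulr0 addr0 => ->; rewrite add0r mulr1.
have lower0 : \col_l alpha (widen_ord (leqnSn _) l) 0 = 0.
  apply: IHn => j; have [i <-] := p_surj j; have := alpha0 i.
  by rewrite Rvertex_recr top0 mul0r addr0.
apply/matrixP => i k; rewrite ord1 mxE.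
have [lt_in|le_ni] := ltnP i n.+1.
  have := congr1 (fun M : 'cV[rat]_n.+1 => M (Ordinal lt_in) 0) lower0.
  by rewrite !mxE; congr (alpha _ _ = _); apply: val_inj.
suff -> : i = ord_max by [].
by apply: val_inj; apply/eqP; rewrite eqn_leq le_ni -ltnS ltn_ord.
Qed.

Lemma Rvertex_onto n (g : 'I_n.+1 -> int) :
  exists alpha : 'cV[int]_n.+1, forall j, Rvertex (intr_mx alpha) j = (g j)%:~R.
Proof.
elim: n g => [|n IHn] g.
  exists (\col_i g ord0) => j.
  by rewrite /Rvertex big_ord1 [ancestor _ _ _]ord1 [r 0]ord1 [j]ord1 eqxx mulr1 !mxE.
have [r' [lt_r' eq_p]] := r_split n.
have ne_r' : r' != r n.+1 by rewrite neq_ltn lt_r'.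
have ex_pre j : exists i, (i != r n.+1) && (p n i == j).
  have [i <-] := p_surj j; have [->|ne_i] := eqVneq i (r n.+1).
    by exists r'; rewrite ne_r' eq_p eqxx.
  by exists i; rewrite ne_i eqxx.
pose pre j := xchoose (ex_pre j).
have preK i : i != r n.+1 -> pre (p n i) = i.
  move=> ne_i; have /andP[ne_pre /eqP p_pre] := xchooseP (ex_pre (p n i)).
  by apply: p_injective_off; rewrite ?inE.
have [beta betaP] := IHn (fun j => g (pre j)).
pose alpha : 'cV[int]_n.+2 :=
  \col_i (if (i < n.+1)%N then beta (inord i) 0 else g (r n.+1) - g r').
exists alpha => i; rewrite Rvertex_recr.
have -> : \col_l intr_mx alpha (widen_ord (leqnSn n.+1) l) 0 = intr_mx beta.
  apply/matrixP => l k; rewrite ord1 !mxE /= ltn_ord.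
  by congr (beta _ _)%:~R; apply: val_inj; rewrite /= inordK.
rewrite betaP !mxE /= ltnn; have [->|ne_i] := eqVneq i (r n.+1).
  by rewrite -eq_p preK // mulr1 -intrD addrC subrK.
by rewrite preK // mulr0 addr0.
Qed.

End Levels.

Section CastMx.

Variable R : pzRingType.

Lemma mulmx_castmx_rows a b (e : a = b) k l (A : 'M[R]_(a, k)) (B : 'M_(k, l)) :
  castmx (e, erefl) A *m B = castmx (e, erefl) (A *m B).
Proof. by case: b / e; rewrite !castmx_id. Qed.

Lemma mulmx_castmx_inner a b (e : a = b) k l (A : 'M[R]_(k, a)) (B : 'M_(a, l)) :
  castmx (erefl, e) A *m castmx (e, erefl) B = A *m B.
Proof. by case: b / e; rewrite !castmx_id. Qed.

Lemma mulmx_castmx_sq a b (e : a = b) l (A : 'M[R]_a) (B : 'M_(a, l)) :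
  castmx (e, e) A *m castmx (e, erefl) B = castmx (e, erefl) (A *m B).
Proof. by case: b / e; rewrite !castmx_id. Qed.

Lemma castmx_sqM a b (e : a = b) (A B : 'M[R]_a) :
  castmx (e, e) A *m castmx (e, e) B = castmx (e, e) (A *m B).
Proof. by case: b / e; rewrite !castmx_id. Qed.

Lemma castmx_sq1 a b (e : a = b) : castmx (e, e) (1%:M : 'M[R]_a) = 1%:M.
Proof. by case: b / e; rewrite castmx_id. Qed.

End CastMx.

Lemma det_castmx_sq (R : comPzRingType) a b (e : a = b) (A : 'M[R]_a) :
  \det (castmx (e, e) A) = \det A.
Proof. by case: b / e; rewrite castmx_id. Qed.

Definition dsum1 (R : pzRingType) n (M : 'M[R]_n.+1) : 'M[R]_n.+2 :=
  castmx (addn1 n.+1, addn1 n.+1) (block_mx M 0 0 1%:M).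

Definition ext0 (R : pzRingType) n k (M : 'M[R]_(n.+1, k)) : 'M[R]_(n.+2, k) :=
  castmx (addn1 n.+1, erefl) (col_mx M 0).

Section Dsum.

Variable R : pzRingType.

Lemma dsum1M n (A B : 'M[R]_n.+1) : dsum1 A *m dsum1 B = dsum1 (A *m B).
Proof.
by rewrite /dsum1 castmx_sqM mulmx_block !mulmx0 !mul0mx !addr0 add0r mulmx1.
Qed.

Lemma dsum1_1 n : dsum1 (1%:M : 'M[R]_n.+1) = 1%:M.
Proof. by rewrite /dsum1 -scalar_mx_block castmx_sq1. Qed.

Lemma dsum1_ext0 n k (A : 'M[R]_n.+1) (B : 'M_(n.+1, k)) :
  dsum1 A *m ext0 B = ext0 (A *m B).
Proof.
by rewrite /dsum1 /ext0 mulmx_castmx_sq mul_block_col !mulmx0 mul0mx addr0 add0r.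
Qed.

Lemma ext0_mulmx n k l (A : 'M[R]_(n.+1, k)) (B : 'M_(k, l)) :
  ext0 A *m B = ext0 (A *m B).
Proof. by rewrite /ext0 mulmx_castmx_rows mul_col_mx mul0mx. Qed.

End Dsum.

Lemma map_dsum1 (R S : pzRingType) (f : {rmorphism R -> S}) n (A : 'M[R]_n.+1) :
  map_mx f (dsum1 A) = dsum1 (map_mx f A).
Proof. by rewrite /dsum1 map_castmx map_block_mx map_mx1 !map_mx0. Qed.

Lemma det_dsum1 (R : comPzRingType) n (A : 'M[R]_n.+1) : \det (dsum1 A) = \det A.
Proof. by rewrite det_castmx_sq det_ublock det1 mulr1. Qed.

Lemma Rmap_ext0 r n (u : 'cV[rat]_n.+1) z : Rmap r (ext0 u) z = Rmap r u z.
Proof.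
rewrite /Rmap big_ord_recr /= castmxE.
have -> : cast_ord (esym (addn1 n.+1)) ord_max = rshift n.+1 (ord0 : 'I_1).
  by apply: val_inj; rewrite /= addn0.
rewrite col_mxEd mxE mul0r addr0; apply: eq_bigr => l _; rewrite castmxE.
have -> : cast_ord (esym (addn1 n.+1)) (widen_ord (leqnSn n.+1) l) = lshift 1 l.
  exact: val_inj.
by rewrite col_mxEu; congr (u _ _ * _); apply: val_inj.
Qed.

Lemma intr_mxM m k l (A : 'M[int]_(m, k)) (B : 'M_(k, l)) :
  intr_mx (A *m B) = intr_mx A *m intr_mx B.
Proof. exact: map_mxM. Qed.

Section IntegerModels.

Variables (Abar : forall n, 'M[nat]_(n.+2, n.+1)) (c : forall n, 'cV[int]_(n.+2)).
Hypothesis det_Acomp : forall n, \det (Acomp Abar c n) = 1.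

(* Since [det A_{n,n+1} = 1], the inverse of [A_{n,n+1}] is its adjugate, so
   [A_n] and [A_n^-1] are integer matrices. *)
Fixpoint Aint n : 'M[int]_n.+1 :=
  if n is m.+1 then dsum1 (Aint m) *m \adj (Acomp Abar c m) else 1%:M.

Fixpoint Ainv_int n : 'M[int]_n.+1 :=
  if n is m.+1 then Acomp Abar c m *m dsum1 (Ainv_int m) else 1%:M.

Lemma invmx_intr_Acomp n :
  invmx (intr_mx (Acomp Abar c n)) = intr_mx (\adj (Acomp Abar c n)).
Proof.
rewrite /invmx unitmxE /intr_mx det_map_mx det_Acomp rmorph1 unitr1 invr1 scale1r.
by rewrite map_mx_adj.
Qed.

Lemma Amat_int n : Amat Abar c n = intr_mx (Aint n).
Proof.
elim: n => [|n IHn]; first by rewrite /intr_mx map_mx1.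
rewrite [Amat _ _ _]/= -/(dsum1 (Amat Abar c n)) invmx_intr_Acomp IHn.
by rewrite intr_mxM /intr_mx map_dsum1.
Qed.

Lemma Aint_mulV n : Aint n *m Ainv_int n = 1%:M.
Proof.
elim: n => [|n IHn] /=; first by rewrite mulmx1.
rewrite -mulmxA (mulmxA (\adj _)) mul_adj_mx det_Acomp mul1mx dsum1M IHn.
exact: dsum1_1.
Qed.

Lemma Amat_mulV n : Amat Abar c n *m intr_mx (Ainv_int n) = 1%:M.
Proof. by rewrite Amat_int -intr_mxM Aint_mulV /intr_mx map_mx1. Qed.

Lemma Amat_unit n : Amat Abar c n \in unitmx.
Proof. by case/mulmx1_unit: (Amat_mulV n). Qed.

Lemma invmx_Amat n : invmx (Amat Abar c n) = intr_mx (Ainv_int n).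
Proof. by rewrite -[invmx _]mulmx1 -Amat_mulV mulmxA mulVmx ?Amat_unit // mul1mx. Qed.

Lemma det_Ainv_int n : \det (Ainv_int n) = 1.
Proof.
by elim: n => [|n IHn] /=; rewrite ?det1 // det_mulmx det_Acomp det_dsum1 IHn mulr1.
Qed.

(* The identity [Phi_{n+1} \o phi_n* = Phi_n], before applying [R_{n+1}]. *)
Lemma Amat_push n (v : 'cV[int]_n.+1) :
  Amat Abar c n.+1 *m intr_mx (push Abar v) = ext0 (Amat Abar c n *m intr_mx v).
Proof.
set X := intr_mx (Acomp Abar c n).
have X_unit : X \in unitmx.
  by rewrite unitmxE /X /intr_mx det_map_mx det_Acomp rmorph1 unitr1.
have AbarE : intr_mx (AbarZ Abar n) = X *m ext0 1%:M.
  rewrite /X /Acomp /intr_mx /ext0 map_castmx map_row_mx mulmx_castmx_inner.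
  by rewrite mul_row_col mulmx1 mulmx0 addr0.
rewrite [Amat _ _ _]/= -/(dsum1 (Amat Abar c n)) /push intr_mxM -/X AbarE.
rewrite !mulmxA -(mulmxA _ (invmx X)) mulVmx // mulmx1.
by rewrite dsum1_ext0 mulmx1 ext0_mulmx.
Qed.

End IntegerModels.

Lemma Rmap_add r n (a b : 'cV[rat]_n.+1) z : Rmap r (a + b) z = Rmap r a z + Rmap r b z.
Proof. by rewrite /Rmap -big_split; apply: eq_bigr => l _; rewrite mxE mulrDl. Qed.

Lemma Rmap_sub r n (a b : 'cV[rat]_n.+1) z : Rmap r (a - b) z = Rmap r a z - Rmap r b z.
Proof. by rewrite /Rmap -sumrB; apply: eq_bigr => l _; rewrite !mxE mulrBl. Qed.

Lemma K0eq_lift Abar n (v : 'cV[int]_n.+1) N :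
  (n <= N)%N -> exists w : 'cV[int]_N.+1, K0eq Abar (K0mk v) (K0mk w).
Proof.
move=> /subnK <-; elim: (N - n)%N => [|k [w vw]]; first by exists v; apply: rst_refl.
exists (push Abar w); apply: rst_trans vw _; apply: rst_step.
by exists (k + n)%N, w.
Qed.

Section Psi.

Variables (Abar : forall n, 'M[nat]_(n.+2, n.+1)) (c : forall n, 'cV[int]_(n.+2)).
Variables (p : forall n, 'I_n.+2 -> 'I_n.+1) (r : forall n, 'I_n.+1).
Arguments p : clear implicits.
Hypothesis det_Acomp : forall n, \det (Acomp Abar c n) = 1.
Hypothesis p_surj : forall n (j : 'I_n.+1), exists i : 'I_n.+2, p n i = j.
Hypothesis r_split :
  forall n, exists r' : 'I_n.+2, (r' < r n.+1)%N /\ p n r' = p n (r n.+1).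

Lemma Gset_int q : Gset Abar c q <-> exists a : int, q = a%:~R.
Proof.
have det1 n : \det (invmx (Amat Abar c n)) = 1.
  by rewrite invmx_Amat // /intr_mx det_map_mx det_Ainv_int.
split => [[n [_ [a ->]]]|[a ->]]; first by exists a; rewrite det1 divr1.
by exists 1%N; split => //; exists a; rewrite det1 divr1.
Qed.

Lemma Psi_K0eq x y : K0eq Abar x y -> forall z, Psi Abar c r x z = Psi Abar c r y z.
Proof.
elim=> {x y} [x y [n [v [-> ->]]]|x|x y _ IH|x y w _ IH1 _ IH2] z.
- by rewrite /Psi /Phi /= Amat_push // Rmap_ext0.
- by [].
- by rewrite IH.
- by rewrite IH1 IH2.
Qed.

Lemma Psi_add n (v w : 'cV[int]_n.+1) z :
  Psi Abar c r (K0mk (v + w)) z = Psi Abar c r (K0mk v) z + Psi Abar c r (K0mk w) z.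
Proof. by rewrite /Psi /Phi /= /intr_mx map_mxD mulmxDr Rmap_add. Qed.

Lemma Psi_locconst_int x : exists f : pathT -> int, locconst p f /\
  forall z, is_path p z -> Psi Abar c r x z = (f z)%:~R.
Proof.
case: x => n v.
exists (fun z => \sum_(l < n.+1) (Aint Abar c n *m v) l 0 * (z l == r l)%:R).
split=> [y yP|z _].
  exists n => z zP zy; apply: eq_bigr => l _; have le_ln : (l <= n)%N by rewrite -ltnS.
  by rewrite -(ancestor_path zP le_ln) -(ancestor_path yP le_ln) zy.
rewrite /Psi /Phi /= Amat_int // -intr_mxM /Rmap rmorph_sum; apply: eq_bigr => l _.
by rewrite !mxE rmorphM rmorph_nat.
Qed.

Lemma Psi_inj x y : (forall z, is_path p z -> Psi Abar c r x z = Psi Abar c r y z) ->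
  K0eq Abar x y.
Proof.
case: x y => n v [m w] Psi_eq.
have [v' vv'] := K0eq_lift Abar v (leq_addl m n).
have [w' ww'] := K0eq_lift Abar w (leq_addr n m).
suff eq_v'w' : v' = w'.
  by rewrite eq_v'w' in vv'; exact: rst_trans vv' (rst_sym _ _ _ _ ww').
have Rv'w' j :
    Rvertex p r (Amat Abar c (m + n) *m (intr_mx v' - intr_mx w')) j = 0.
  have zP := path_through_is_path p_surj j.
  rewrite -[j](path_through_at p_surj) -Rmap_vertex // mulmxBr Rmap_sub.
  have := Psi_eq _ zP; rewrite (Psi_K0eq vv') (Psi_K0eq ww') /Psi /Phi /= => ->.
  exact: subrr.
have := Rvertex_eq0 p_surj r_split Rv'w'.
move/(congr1 (mulmx (invmx (Amat Abar c (m + n))))).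
rewrite mulKmx ?Amat_unit // mulmx0 => /eqP; rewrite subr_eq0 => /eqP eq_intr.
apply/matrixP => i k; apply: (@intr_inj rat).
by have := congr1 (fun M : 'cV[rat]_(m + n).+1 => M i k) eq_intr; rewrite !mxE.
Qed.

Lemma Psi_onto f : locconst p f ->
  exists x, forall z, is_path p z -> Psi Abar c r x z = (f z)%:~R.
Proof.
move=> /locconst_factors [N fN].
have [alpha alphaP] :=
  Rvertex_onto p_surj r_split (fun j : 'I_N.+1 => f (path_through p_surj j)).
exists (K0mk (Ainv_int Abar c N *m alpha)) => z zP.
rewrite /Psi /Phi /= intr_mxM mulmxA Amat_mulV // mul1mx (Rmap_vertex _ _ zP) alphaP.
by rewrite (fN _ z (path_through_is_path p_surj _) zP (path_through_at p_surj _)).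
Qed.

End Psi.

Lemma Psi_unit Abar c r z : Psi Abar c r K0unit z = 1.
Proof.
rewrite /Psi /Phi /Rmap big_ord1 /= /intr_mx map_mx1 mulmx1 mxE eqxx.
by rewrite [z 0%N]ord1 [r 0%N]ord1 eqxx mulr1.
Qed.

Theorem theorem4p2
  (Abar : forall n, 'M[nat]_(n.+2, n.+1))
  (Hrank : forall n, \rank (intr_mx (AbarZ Abar n) : 'M[rat]_(n.+2, n.+1)) = n.+1)
  (p : forall n, 'I_n.+2 -> 'I_n.+1)
  (Hp_edge : forall n (i : 'I_n.+2), (0 < Abar n i (p n i))%N)
  (Hp_surj : forall n (j : 'I_n.+1), exists i : 'I_n.+2, p n i = j)
  (r : forall n, 'I_n.+1)
  (Hr : forall n, exists r' : 'I_n.+2, (r' < r n.+1)%N /\ p n r' = p n (r n.+1))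
  (c : forall n, 'cV[int]_(n.+2))
  (Hdet : forall n, \det (Acomp Abar c n) = 1) :
  (forall q : rat, Gset Abar c q <-> exists a : int, q = a%:~R)
  /\ (forall x y, K0eq Abar x y ->
        forall z, is_path p z -> Psi Abar c r x z = Psi Abar c r y z)
  /\ (forall n (v w : 'cV[int]_(n.+1)) z, is_path p z ->
        Psi Abar c r (K0mk (v + w)) z
        = Psi Abar c r (K0mk v) z + Psi Abar c r (K0mk w) z)
  /\ (forall x, exists f : pathT -> int, locconst p f /\
        forall z, is_path p z -> Psi Abar c r x z = (f z)%:~R)
  /\ (forall x y, (forall z, is_path p z -> Psi Abar c r x z = Psi Abar c r y z) ->
        K0eq Abar x y)
  /\ (forall f : pathT -> int, locconst p f ->
        exists x, forall z, is_path p z -> Psi Abar c r x z = (f z)%:~R)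
  /\ (forall z, is_path p z -> Psi Abar c r K0unit z = 1).
Proof.
split; first exact: Gset_int.
split; first by move=> x y xy z _; apply: Psi_K0eq.
split; first by move=> n v w z _; apply: Psi_add.
split; first exact: Psi_locconst_int.
split; first exact: Psi_inj.
split; first exact: Psi_onto.
by move=> z _; apply: Psi_unit.
Qed.
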